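(* Let $\langle A,C,d,O,v,(\prec_a)_{a\in A}\rangle$ be an infinite sequential game, let $a\in A$, and assume: (1) $\prec_a$ is a strict weak order; (2) for every play $p\in C^\omega$ and increasing $\varphi:\mathbb{N}\to\mathbb{N}$, if $d(p_{<\varphi(n)})=a$ and $G_a(p_{<\varphi(n+1)})\subsetneq G_a(p_{<\varphi(n)})$ for all $n\in\mathbb{N}$, then $v(p)\in\bigcap_{n\in\mathbb{N}}G_a(p_{<\varphi(n)})$; (3) for every $\gamma\in C^*$ there exists a strategy $s$ of $a$ with $g_a(\gamma,s)=G_a(\gamma)$. Then there exists a strategy $s$ of $a$ such that $g_a(\gamma,s)=G_a(\gamma)$ for all $\gamma\in C^*$.
   Context: An infinite sequential game $\langle A,C,d,O,v,(\prec_a)_{a\in A}\rangle$ consists of a non-empty set of agents $A$, a non-empty set of choices $C$, $d:C^*\to A$ (the agent choosing after each finite history), a non-empty set of outcomes $O$, $v:C^\omega\to O$, and binary relations $\prec_a$ on $O$. A strategy of $a$ is a function $s:d^{-1}(\{a\})\to C$. For a partial function $t:\subseteq C^*\to C$, $P(t)$ is the set of plays $p(\sigma)$ (where $p_n=\sigma(p_{<n})$) over all total $\sigma:C^*\to C$ extending $t$. For $\gamma\in C^*$ and strategy $s$ of $a$, $s|_\gamma$ is the restriction of $s$ to histories in $d^{-1}(\{a\})$ extending $\gamma$; $g_a(\gamma,s):=\{o\in O\mid\exists p\in P(s|_\gamma)\cap\gamma C^\omega,\ \neg(o\prec_a v(p))\}$ and $G_a(\gamma):=\bigcap_s g_a(\gamma,s)$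 over all strategies $s$ of $a$. $p_{<n}$ is the length-$n$ prefix of $p$. A strict weak order is an irreflexive, transitive relation $\prec$ such that $\neg(x\prec y)\wedge\neg(y\prec z)$ implies $\neg(x\prec z)$. *)

From Stdlib Require Import List.
Import ListNotations.
Set Implicit Arguments.

Section Games.
Variables (A C O : Type).

Definition prefix (p : nat -> C) (n : nat) : list C := map p (seq 0 n).

Fixpoint hist (sigma : list C -> C) (n : nat) : list C :=
  match n with
  | 0 => []
  | S m => hist sigma m ++ [sigma (hist sigma m)]
  end.

Definition play (sigma : list C -> C) : nat -> C := fun n => sigma (hist sigma n).

Definition Pplays (Dom : list C -> Prop) (t : forall h, Dom h -> C) (p : nat -> C) : Prop :=
  exists sigma : list C -> C,
    (forall h (Hh : Dom h), sigma h = t h Hh) /\ (forall n, p n = play sigma n).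

Variable d : list C -> A.

Definition strategy (a : A) : Type := forall h : list C, d h = a -> C.

Definition restr_dom (a : A) (gamma : list C) (h : list C) : Prop :=
  d h = a /\ exists l, h = gamma ++ l.

Definition restr (a : A) (s : strategy a) (gamma : list C)
  : forall h, restr_dom a gamma h -> C :=
  fun h Hh => s h (proj1 Hh).

Definition extends_hist (gamma : list C) (p : nat -> C) : Prop :=
  prefix p (length gamma) = gamma.

Variables (v : (nat -> C) -> O) (lt : A -> O -> O -> Prop).

Definition g_a (a : A) (gamma : list C) (s : strategy a) (o : O) : Prop :=
  exists p, @Pplays (restr_dom a gamma) (@restr a s gamma) p /\ extends_hist gamma p /\ ~ lt a o (v p).

Definition G_a (a : A) (gamma : list C) (o : O) : Prop :=
  forall s : strategy a, g_a gamma s o.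

End Games.

Definition set_eq {O : Type} (X Y : O -> Prop) : Prop := forall o, X o <-> Y o.
Definition strict_subset {O : Type} (X Y : O -> Prop) : Prop :=
  (forall o, X o -> Y o) /\ ~ set_eq X Y.

Definition strict_weak_order {O : Type} (R : O -> O -> Prop) : Prop :=
  (forall x, ~ R x x) /\
  (forall x y z, R x y -> R y z -> R x z) /\
  (forall x y z, ~ R x y -> ~ R y z -> ~ R x z).

(* Fix for every history gamma an optimal strategy s_gamma (hypothesis 3). The strategy built
   here plays, at a history h, the move of s_gamma for the "anchor" gamma of h: a prefix of h that
   is moved forward to the current history exactly when either the last move deviated from
   s_gamma or the guaranteed set G changed. Along a play that follows it, the guaranteed sets of
   the successive anchors form a chain that shrinks strictly at every change of anchor. If the
   anchor eventually stops changing at positions of the agent, the play follows a single optimal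
   strategy s_gamma from gamma on, so its outcome is guaranteed at gamma; otherwise the strict
   decreases happen at infinitely many positions of the agent and hypothesis 2 puts the outcome
   into G of every anchor. Either way the outcome (and everything not above it, by negative
   transitivity) lies in G of the starting history. *)
From Stdlib Require Import List Arith Lia ClassicalEpsilon ProofIrrelevance Classical.
Import ListNotations.

Lemma firstn_length_app {T : Type} (l1 l2 : list T) : firstn (length l1) (l1 ++ l2) = l1.
Proof. rewrite <- (Nat.add_0_r (length l1)), firstn_app_2. apply app_nil_r. Qed.

Lemma strict_subset_trans {T : Type} (X Y Z : T -> Prop) :
  (forall o, X o -> Y o) -> strict_subset Y Z -> strict_subset X Z.
Proof.
  intros XY [YZ Hne]. split; [auto|].
  intro E. apply Hne. intro o. split; [auto|]. intro Zo. apply XY, E, Zo.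
Qed.

Lemma strict_subset_set_eq {T : Type} (X X' Y Y' : T -> Prop) :
  set_eq X X' -> set_eq Y Y' -> strict_subset X' Y' -> strict_subset X Y.
Proof.
  intros EX EY [XY Hne]. split.
  - intros o Xo. apply EY, XY, EX, Xo.
  - intro E. apply Hne. intro o. specialize (EX o). specialize (EY o). specialize (E o). tauto.
Qed.

Lemma increasing_chain (P : nat -> Prop) (R : nat -> nat -> Prop) (n0 : nat) :
  (forall M, n0 <= M -> exists k, M < k /\ P k /\ R M k) ->
  exists phi : nat -> nat,
    (forall n, n0 < phi n /\ P (phi n)) /\ (forall n, phi n < phi (S n) /\ R (phi n) (phi (S n))).
Proof.
  intros Hunb.
  destruct (choice (fun M k => n0 <= M -> M < k /\ P k /\ R M k)) as [f Hf].
  { intro M. destruct (le_lt_dec n0 M) as [HM|HM].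
    - destruct (Hunb M HM) as [k Hk]. exists k. auto.
    - exists 0. lia. }
  exists (fun n => Nat.iter (S n) f n0).
  assert (Hbound : forall n, n0 < Nat.iter (S n) f n0 /\ P (Nat.iter (S n) f n0)).
  { induction n as [|n IH]; rewrite Nat.iter_succ.
    - destruct (Hf n0 (le_n n0)) as [? [? _]]. auto.
    - destruct IH as [Hlt _]. destruct (Hf _ (Nat.lt_le_incl _ _ Hlt)) as [? [? _]].
      split; [lia|auto]. }
  split; [exact Hbound|]. intro n. rewrite (Nat.iter_succ (S n)).
  destruct (Hf _ (Nat.lt_le_incl _ _ (proj1 (Hbound n)))) as [? [_ ?]]. auto.
Qed.

Section Prefixes.
Context {C : Type}.

Lemma length_prefix (p : nat -> C) n : length (prefix p n) = n.
Proof. unfold prefix. rewrite length_map, length_seq. reflexivity. Qed.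

Lemma prefix_S (p : nat -> C) n : prefix p (S n) = prefix p n ++ [p n].
Proof. unfold prefix. rewrite seq_S, map_app. reflexivity. Qed.

Lemma prefix_ext (p q : nat -> C) n : (forall k, p k = q k) -> prefix p n = prefix q n.
Proof. intros E. unfold prefix. apply map_ext. auto. Qed.

Lemma prefix_le (p : nat -> C) j k : j <= k -> prefix p k = prefix p j ++ map p (seq j (k - j)).
Proof.
  intros H. unfold prefix. replace k with (j + (k - j)) at 1 by lia.
  rewrite seq_app, map_app. reflexivity.
Qed.

Lemma firstn_prefix (p : nat -> C) j k : j <= k -> firstn j (prefix p k) = prefix p j.
Proof.
  intros H. rewrite (prefix_le p j k H).
  rewrite <- (length_prefix p j) at 1. apply firstn_length_app.
Qed.

Lemma prefix_app (p : nat -> C) k x l : prefix p k = x ++ l -> x = prefix p (length x).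
Proof.
  intros E. assert (Hx : length x <= k).
  { rewrite <- (length_prefix p k), E, length_app. lia. }
  rewrite <- (firstn_prefix p (length x) k Hx), E. symmetry. apply firstn_length_app.
Qed.

Lemma prefix_agree_le (p q : nat -> C) M k :
  prefix q M = prefix p M -> k <= M -> prefix q k = prefix p k.
Proof. intros E H. rewrite <- (firstn_prefix q k M H), <- (firstn_prefix p k M H), E. reflexivity. Qed.

Lemma prefix_agree_lt (p q : nat -> C) M k : prefix q M = prefix p M -> k < M -> q k = p k.
Proof.
  intros E H. pose proof (prefix_agree_le p q M (S k) E H) as ES.
  rewrite !prefix_S in ES. apply app_inj_tail in ES. tauto.
Qed.

Lemma hist_play (sigma : list C -> C) n : hist sigma n = prefix (play sigma) n.
Proof.
  induction n as [|n IH]; [reflexivity|].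
  cbn [hist]. rewrite prefix_S, <- IH. reflexivity.
Qed.

Lemma Pplays_iff (Dom : list C -> Prop) (t : forall h, Dom h -> C) (p : nat -> C) :
  Pplays Dom t p <-> forall n (H : Dom (prefix p n)), p n = t _ H.
Proof.
  split.
  - intros [sigma [Ht Hp]] n H.
    assert (Eh : hist sigma n = prefix p n).
    { rewrite hist_play. apply prefix_ext. intro k. symmetry. apply Hp. }
    rewrite Hp. unfold play. rewrite <- Ht, Eh. reflexivity.
  - intros Ht.
    set (sigma := fun h => match excluded_middle_informative (Dom h) with
                           | left H => t h H | right _ => p (length h) end).
    assert (Hsigma : forall n, sigma (prefix p n) = p n).
    { intro n. unfold sigma. destruct (excluded_middle_informative _) as [H|H].
      - symmetry. apply Ht.
      - rewrite length_prefix. reflexivity. }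
    assert (Eh : forall n, hist sigma n = prefix p n).
    { induction n as [|n IH]; [reflexivity|].
      cbn [hist]. rewrite prefix_S, IH, Hsigma. reflexivity. }
    exists sigma. split.
    + intros h Hh. unfold sigma. destruct (excluded_middle_informative _) as [H|H].
      * f_equal. apply proof_irrelevance.
      * contradiction.
    + intro n. unfold play. rewrite Eh, Hsigma. reflexivity.
Qed.

End Prefixes.

Section Guarantees.
Variables (A C O : Type) (d : list C -> A) (v : (nat -> C) -> O) (lt : A -> O -> O -> Prop) (a : A).

Local Notation G := (G_a d v lt a).
Local Notation g gamma s := (@g_a A C O d v lt a gamma s).

Definition follows_on (s : strategy d a) (p : nat -> C) (lo hi : nat) : Prop :=
  forall k, lo <= k < hi -> forall H : d (prefix p k) = a, p k = s (prefix p k) H.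

Definition follows_from (s : strategy d a) (p : nat -> C) (lo : nat) : Prop :=
  forall k, lo <= k -> forall H : d (prefix p k) = a, p k = s (prefix p k) H.

Lemma g_a_iff gamma s o : g gamma s o <->
  exists p, extends_hist gamma p /\ follows_from s p (length gamma) /\ ~ lt a o (v p).
Proof.
  split.
  - intros [p [Hp [Hext Ho]]]. exists p. split; [exact Hext|]. split; [|exact Ho].
    rewrite Pplays_iff in Hp. intros k Hk H.
    assert (Hdom : restr_dom d a gamma (prefix p k)).
    { split; [exact H|]. exists (map p (seq (length gamma) (k - length gamma))).
      rewrite (prefix_le p (length gamma) k Hk). unfold extends_hist in Hext. rewrite Hext. reflexivity. }
    rewrite (Hp k Hdom). unfold restr. f_equal. apply proof_irrelevance.
  - intros [p [Hext [Hs Ho]]]. exists p. split; [|split; [exact Hext|exact Ho]].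
    apply Pplays_iff. intros n [H [l E]]. apply Hs.
    rewrite <- (length_prefix p n), E, length_app. lia.
Qed.

Lemma g_a_follows_on_mono s (p : nat -> C) m M : m <= M -> follows_on s p m M ->
  forall o, g (prefix p M) s o -> g (prefix p m) s o.
Proof.
  intros HmM Hs o Hg. apply g_a_iff in Hg as [q [Hext [Hq Ho]]]. apply g_a_iff.
  unfold extends_hist in *. rewrite length_prefix in *.
  exists q. split; [|split; [|exact Ho]].
  - exact (prefix_agree_le p q M m Hext HmM).
  - intros k Hk H. destruct (le_lt_dec M k) as [HMk|HkM]; [apply Hq; exact HMk|].
    assert (Ek : prefix q k = prefix p k) by (apply (prefix_agree_le p q M k Hext); lia).
    rewrite (prefix_agree_lt p q M k Hext HkM).
    revert H. rewrite Ek. intro H. apply Hs. lia.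
Qed.

Hypothesis neg_trans : forall x y z, ~ lt a x y -> ~ lt a y z -> ~ lt a x z.

Hypothesis decreasing_limit : forall (p : nat -> C) (phi : nat -> nat),
  (forall n, phi n < phi (S n)) ->
  (forall n, d (prefix p (phi n)) = a /\
     strict_subset (G (prefix p (phi (S n)))) (G (prefix p (phi n)))) ->
  forall n, G (prefix p (phi n)) (v p).

Lemma G_a_not_below gamma x o : G gamma x -> ~ lt a o x -> G gamma o.
Proof.
  intros Hx Hox s. destruct (Hx s) as [p [Hp [Hext Hxp]]].
  exists p. split; [exact Hp|]. split; [exact Hext|]. exact (neg_trans _ _ _ Hox Hxp).
Qed.

Variable Sg : list C -> strategy d a.
Hypothesis Sg_optimal : forall gamma, set_eq (g gamma (Sg gamma)) (G gamma).

Definition anchor_keeps (h al : list C) (c : C) : Prop :=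
  (forall H : d h = a, c = Sg al h H) /\ set_eq (G (h ++ [c])) (G al).

Definition anchor_step (h al : list C) (c : C) : list C :=
  if excluded_middle_informative (anchor_keeps h al c) then al else h ++ [c].

Fixpoint anchor_from (h al l : list C) : list C :=
  match l with
  | [] => al
  | c :: l => anchor_from (h ++ [c]) (anchor_step h al c) l
  end.

Definition anchor (h : list C) : list C := anchor_from [] [] h.

Definition anchored : strategy d a := fun h H => Sg (anchor h) h H.

Lemma anchor_from_snoc l : forall h al c,
  anchor_from h al (l ++ [c]) = anchor_step (h ++ l) (anchor_from h al l) c.
Proof.
  induction l as [|c0 l IH]; intros h al c; cbn.
  - rewrite app_nil_r. reflexivity.
  - rewrite IH, <- app_assoc. reflexivity.
Qed.

Lemma anchor_snoc h c : anchor (h ++ [c]) = anchor_step h (anchor h) c.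
Proof. apply anchor_from_snoc. Qed.

Lemma anchor_prefix h : exists l, h = anchor h ++ l.
Proof.
  induction h as [|c h [l E]] using rev_ind; [exists []; reflexivity|].
  rewrite anchor_snoc. unfold anchor_step. destruct (excluded_middle_informative _).
  - exists (l ++ [c]). rewrite E at 1. symmetry. apply app_assoc.
  - exists []. symmetry. apply app_nil_r.
Qed.

Lemma G_anchor h : set_eq (G h) (G (anchor h)).
Proof.
  induction h as [|c h IH] using rev_ind; [intro; reflexivity|].
  rewrite anchor_snoc. unfold anchor_step. destruct (excluded_middle_informative _) as [K|K].
  - apply K.
  - intro; reflexivity.
Qed.

Section Play.
Variable q : nat -> C.

Local Notation anc k := (anchor (prefix q k)).

Lemma anchor_prefix_play k : anc k = prefix q (length (anc k)) /\ length (anc k) <= k.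
Proof.
  destruct (anchor_prefix (prefix q k)) as [l E]. split.
  - exact (prefix_app q k _ _ E).
  - apply (f_equal (@length C)) in E. rewrite length_app, length_prefix in E. lia.
Qed.

Lemma follows_anchor k : follows_on (Sg (anc k)) q (length (anc k)) k.
Proof.
  induction k as [|k IH]; intros j Hj H; [lia|].
  rewrite prefix_S, anchor_snoc in *. unfold anchor_step in *.
  destruct (excluded_middle_informative _) as [K|K].
  - destruct (Nat.eq_dec j k) as [->|Hjk]; [apply K|].
    apply IH. lia.
  - rewrite length_app, length_prefix in Hj. cbn in Hj. lia.
Qed.

Variable n0 : nat.
Hypothesis q_follows : follows_from anchored q n0.

Lemma anchor_shrinks k : n0 <= k ->
  anc (S k) = anc k \/ strict_subset (G (anc (S k))) (G (anc k)).
Proof.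
  intros Hk.
  assert (Hmove : forall H : d (prefix q k) = a, q k = Sg (anc k) (prefix q k) H)
    by (apply q_follows; exact Hk).
  assert (Hincl : forall o, G (prefix q (S k)) o -> G (anc k) o).
  { intros o Ho. destruct (anchor_prefix_play k) as [Eanc Hlen].
    apply Sg_optimal. rewrite Eanc at 1.
    apply (g_a_follows_on_mono _ q (length (anc k)) (S k)); [lia| |apply Ho].
    intros j Hj H. destruct (Nat.eq_dec j k) as [->|Hjk]; [apply Hmove|].
    apply follows_anchor. lia. }
  rewrite prefix_S in Hincl |- *. rewrite anchor_snoc. unfold anchor_step.
  destruct (excluded_middle_informative _) as [K|K]; [left; reflexivity|].
  right. split; [exact Hincl|]. intro E. apply K. split; [exact Hmove|exact E].
Qed.

Lemma anchor_chain M N : n0 <= M -> M <= N ->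
  anc N = anc M \/ strict_subset (G (anc N)) (G (anc M)).
Proof.
  intros HM HMN. induction HMN as [|N HMN IH]; [left; reflexivity|].
  destruct (anchor_shrinks N) as [E|Hs]; [lia|rewrite E; exact IH|].
  right. destruct IH as [E|HsM].
  - rewrite <- E. exact Hs.
  - exact (strict_subset_trans _ _ _ (proj1 Hs) HsM).
Qed.

Lemma G_anchor_sub_start N : n0 <= N -> forall o, G (anc N) o -> G (prefix q n0) o.
Proof.
  intros HN o Ho. apply G_anchor.
  destruct (anchor_chain n0 N (le_n n0) HN) as [E|[Hsub _]]; [rewrite <- E|apply Hsub]; exact Ho.
Qed.

Lemma G_start_of_stable_anchor M o : n0 <= M ->
  (forall k, M <= k -> d (prefix q k) = a -> anc k = anc M) ->
  ~ lt a o (v q) -> G (prefix q n0) o.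
Proof.
  intros HM Hstable Ho. apply (G_anchor_sub_start M HM).
  destruct (anchor_prefix_play M) as [Eanc Hlen].
  apply Sg_optimal, g_a_iff. exists q. split; [|split; [|exact Ho]].
  - symmetry. exact Eanc.
  - intros k Hk H. destruct (le_lt_dec M k) as [HMk|HkM].
    + rewrite (q_follows k (Nat.le_trans _ _ _ HM HMk) H). unfold anchored.
      rewrite (Hstable k HMk H). reflexivity.
    + apply follows_anchor. lia.
Qed.

Lemma G_start_of_moving_anchor :
  (forall M, n0 <= M -> exists k, M < k /\ d (prefix q k) = a /\ anc k <> anc M) ->
  G (prefix q n0) (v q).
Proof.
  intros Hmoving.
  destruct (increasing_chain _ _ _ Hmoving) as [phi [Hphi Hstep]].
  assert (Hstrict : forall n, strict_subset (G (prefix q (phi (S n)))) (G (prefix q (phi n)))).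
  { intro n. destruct (Hstep n) as [Hlt Hne].
    destruct (anchor_chain (phi n) (phi (S n))) as [E|Hs];
      [specialize (Hphi n); lia|lia|contradiction|].
    exact (strict_subset_set_eq _ _ _ _ (G_anchor _) (G_anchor _) Hs). }
  assert (Hv : G (prefix q (phi 0)) (v q)).
  { apply decreasing_limit; [intro n; apply Hstep|].
    intro n. split; [apply Hphi|apply Hstrict]. }
  apply (G_anchor_sub_start (phi 0) (Nat.lt_le_incl _ _ (proj1 (Hphi 0)))), (G_anchor (prefix q (phi 0))), Hv.
Qed.

Lemma G_start_of_follows_anchored o : ~ lt a o (v q) -> G (prefix q n0) o.
Proof.
  intros Ho.
  destruct (classic (forall M, n0 <= M ->
    exists k, M < k /\ d (prefix q k) = a /\ anc k <> anc M)) as [Hmoving|Hstuck].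
  - exact (G_a_not_below _ _ _ (G_start_of_moving_anchor Hmoving) Ho).
  - apply not_all_ex_not in Hstuck as [M HM]. apply imply_to_and in HM as [HM Hnone].
    apply (G_start_of_stable_anchor M o HM); [|exact Ho].
    intros k Hk Hd. apply NNPP. intro Hne. apply Hnone.
    exists k. split; [|split; [exact Hd|exact Hne]].
    assert (k <> M) by (intros ->; contradiction). lia.
Qed.

End Play.

Lemma g_anchored_sub_G gamma o : g gamma anchored o -> G gamma o.
Proof.
  intros Hg. apply g_a_iff in Hg as [q [Hext [Hq Ho]]].
  unfold extends_hist in Hext. rewrite <- Hext.
  exact (G_start_of_follows_anchored q _ Hq o Ho).
Qed.

End Guarantees.

Theorem lemma21 (A C O : Type) (HC : inhabited C) (HO : inhabited O)
  (d : list C -> A) (v : (nat -> C) -> O) (lt : A -> O -> O -> Prop) (a : A)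
  (H1 : strict_weak_order (lt a))
  (H2 : forall (p : nat -> C) (phi : nat -> nat),
      (forall n, phi n < phi (S n)) ->
      (forall n, d (prefix p (phi n)) = a /\
         strict_subset (G_a d v lt a (prefix p (phi (S n))))
                       (G_a d v lt a (prefix p (phi n)))) ->
      forall n, G_a d v lt a (prefix p (phi n)) (v p))
  (H3 : forall gamma : list C, exists s : strategy d a,
      set_eq (@g_a A C O d v lt a gamma s) (G_a d v lt a gamma)) :
  exists s : strategy d a, forall gamma : list C,
    set_eq (@g_a A C O d v lt a gamma s) (G_a d v lt a gamma).
Proof.
  destruct H1 as [_ [_ neg_trans]].
  destruct (choice _ H3) as [Sg Sg_optimal].
  exists (anchored A C O d v lt a Sg). intros gamma o. split.
  - apply g_anchored_sub_G; assumption.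
  - intros HG. apply HG.
Qed.
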